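(* Let $T:\mathbb{R}^{M}\times\cdots\times\mathbb{R}^{M}\to\mathbb{R}^D$ ($N$ factors) be a real $N$-linear contraction with respect to the Euclidean norm, with coefficients $T_{i,s}$, such that either (i) $T$ is a convex combination of norm-preserving $N$-linear maps $\mathbb{R}^M\times\cdots\times\mathbb{R}^M\to\mathbb{R}^D$, or (ii) $T$ has a norm-preserving dilation. Let $\rho$ be a density operator on $\mathcal{H}_1\otimes\cdots\otimes\mathcal{H}_N$ with $\rho^{T_\tau}\ge0$ for every subset $\tau\subseteq\{1,\dots,N\}$. Then for all Hermitian operators $A^{(k)}_j$ on $\mathcal{H}_k$ ($k=1,\dots,N$, $j=1,\dots,M$), $$\sum_{i=1}^D\Big(\sum_{s}T_{i,s}\,\mathrm{tr}\big[\rho\,A^{(1)}_{s_1}\otimes\cdots\otimes A^{(N)}_{s_N}\big]\Big)^2\le\sum_{s}\mathrm{tr}\big[\rho\,(A^{(1)}_{s_1})^2\otimes\cdots\otimes(A^{(N)}_{s_N})^2\big].$$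
   Context: An $N$-linear map $T$ is written $T(a^{(1)},\dots,a^{(N)})_i=\sum_{s\in\{1,\dots,M\}^N}T_{i,s}\prod_k a^{(k)}_{s_k}$. It is a contraction if $\|T(a^{(1)},\dots,a^{(N)})\|\le\prod_k\|a^{(k)}\|$ for all $a^{(k)}\in\mathbb{R}^M$, and norm-preserving if equality always holds ($\|\cdot\|$ Euclidean). A norm-preserving dilation of $T$ is a norm-preserving $N$-linear map $\tilde T:\mathbb{R}^M\times\cdots\times\mathbb{R}^M\to\mathbb{R}^{D'}$ with $D'\ge D$ whose first $D$ output coordinates coincide with $T$. $\mathcal{H}_1,\dots,\mathcal{H}_N$ are finite-dimensional complex Hilbert spaces with fixed orthonormal bases; $\rho^{T_\tau}$ is the partial transpose on the factors in $\tau$; a density operator is positive semidefinite of trace one. *)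

From HB Require Import structures.
From mathcomp Require Import all_boot all_order all_algebra.
From mathcomp Require Import reals.
From mathcomp Require Import complex.
Set Implicit Arguments. Unset Strict Implicit. Unset Printing Implicit Defensive.
Import Order.TTheory GRing.Theory Num.Theory.
Local Open Scope ring_scope.

Definition midx (N M : nat) := {ffun 'I_N -> 'I_M}.

(* An N-linear map R^M x ... x R^M -> R^D is given by coefficients T i s. *)
Definition mlcoef (R : realType) (N M D : nat) := 'I_D -> midx N M -> R.

Definition mlapply (R : realType) (N M D : nat) (T : mlcoef R N M D)
  (a : 'I_N -> 'I_M -> R) (i : 'I_D) : R :=
  \sum_(s : midx N M) T i s * \prod_(k < N) a k (s k).

Definition enorm (R : realType) (n : nat) (v : 'I_n -> R) : R :=
  Num.sqrt (\sum_(i < n) v i ^+ 2).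

Definition contraction (R : realType) (N M D : nat) (T : mlcoef R N M D) :=
  forall a : 'I_N -> 'I_M -> R,
    enorm (mlapply T a) <= \prod_(k < N) enorm (a k).

Definition norm_preserving (R : realType) (N M D : nat) (T : mlcoef R N M D) :=
  forall a : 'I_N -> 'I_M -> R,
    enorm (mlapply T a) = \prod_(k < N) enorm (a k).

Definition convex_comb_norm_preserving (R : realType) (N M D : nat)
  (T : mlcoef R N M D) :=
  exists (n : nat) (w : 'I_n -> R) (U : 'I_n -> mlcoef R N M D),
    [/\ forall l, 0 <= w l,
        \sum_(l < n) w l = 1,
        forall l, norm_preserving (U l) &
        forall a i, mlapply T a i = \sum_(l < n) w l * mlapply (U l) a i].

Definition has_np_dilation (R : realType) (N M D : nat) (T : mlcoef R N M D) :=
  exists (D' : nat) (hD : (D <= D')%N) (T' : mlcoef R N M D'),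
    norm_preserving T' /\
    forall a (i : 'I_D), mlapply T' a (widen_ord hD i) = mlapply T a i.

(* basis indices of the tensor product: tuples (x_1,...,x_N), x_k < d k *)
Definition tidx (N : nat) (d : 'I_N -> nat) := {dffun forall k : 'I_N, 'I_(d k)}.

(* operators on the tensor product, as matrices w.r.t. the product basis *)
Definition top (R : realType) (N : nat) (d : 'I_N -> nat) := tidx d -> tidx d -> R[i].

Definition tens (R : realType) (N : nat) (d : 'I_N -> nat)
  (A : forall k : 'I_N, 'M[R[i]]_(d k)) : top R d :=
  fun x y => \prod_(k < N) A k (x k) (y k).

Definition trprod (R : realType) (N : nat) (d : 'I_N -> nat) (rho X : top R d) : R[i] :=
  \sum_(x : tidx d) \sum_(y : tidx d) rho x y * X y x.

Definition tr (R : realType) (N : nat) (d : 'I_N -> nat) (rho : top R d) : R[i] :=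
  \sum_(x : tidx d) rho x x.

Definition mixidx (N : nat) (d : 'I_N -> nat) (tau : {set 'I_N}) (x y : tidx d)
  : tidx d := [ffun k => if k \in tau then y k else x k].

Definition ptrans (R : realType) (N : nat) (d : 'I_N -> nat) (tau : {set 'I_N})
  (rho : top R d) : top R d :=
  fun x y => rho (mixidx tau x y) (mixidx tau y x).

Definition psd (R : realType) (N : nat) (d : 'I_N -> nat) (rho : top R d) :=
  forall v : tidx d -> R[i],
    0 <= \sum_(x : tidx d) \sum_(y : tidx d) (v x)^* * rho x y * v y.

Definition density (R : realType) (N : nat) (d : 'I_N -> nat) (rho : top R d) :=
  psd rho /\ tr rho = 1.

Definition hermitian_mx (R : realType) (n : nat) (A : 'M[R[i]]_n) :=
  forall i j, A i j = (A j i)^*.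

From HB Require Import structures.
From mathcomp Require Import all_boot all_order all_algebra.
From mathcomp Require Import reals complex ring lra.
Import Order.TTheory GRing.Theory Num.Theory.
Local Open Scope ring_scope.
Set Implicit Arguments. Unset Strict Implicit. Unset Printing Implicit Defensive.

(* Variance inequality: for a density operator sg and a Hermitian X,
   (tr sg X)^2 <= tr sg X^2.  For each subset tau apply it to sg = rho^{T_tau},
   a density operator by hypothesis, and to X = sum_s T_{i,s} (x)_k A_{s_k},
   with the factors in tau transposed; then tr sg X is the i-th term of the
   left-hand side whatever tau is.  Summed over tau and i, the right-hand sides
   give sum_{s,t} (sum_i T_{i,s} T_{i,t}) tr rho (x)_k {A_{s_k}, A_{t_k}}.
   For a norm-preserving T the form with coefficients
   sum_i T_{i,s} T_{i,t} - delta_{s,t} vanishes on tensor products of rank-one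
   symmetric matrices a a^T, hence, polarizing one factor at a time, on all
   tensor products of symmetric matrices such as the anticommutators; what is
   left is 2^N times the right-hand side.  Convex combinations follow by
   convexity of the square, dilations by dropping the extra coordinates. *)

Lemma prod_sum_dffun (R : comPzSemiRingType) (I : finType) (T_ : I -> finType)
  (F : forall i, T_ i -> R) :
  \prod_i \sum_(j : T_ i) F i j = \sum_(f : {dffun forall i, T_ i}) \prod_i F i (f i).
Proof.
pose P_ i := [ffun j => F i j] : {ffun T_ i -> R}.
transitivity (\prod_i \sum_(j : T_ i) P_ i j).
  by apply: eq_bigr => i _; apply: eq_bigr => j _; rewrite ffunE.
under eq_bigr do rewrite (big_tag (fun i => P_ i)).
rewrite bigA_distr_big_dep -big_fprod.
rewrite (reindex (@fprod_of_dffun _ T_)); last exact/onW_bij/fprod_of_dffun_bij.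
apply: eq_bigr => f _; apply: eq_bigr => i _.
by rewrite /P_ ffunE /fprod_of_dffun fprodE.
Qed.

Lemma sumr_delta_r (R : pzSemiRingType) (T : finType) (F : T -> R) x :
  \sum_y F y * (y == x)%:R = F x.
Proof.
rewrite (bigD1 x) //= eqxx mulr1 big1 ?addr0 // => y /negbTE ->.
by rewrite mulr0.
Qed.

Lemma sumr_delta_l (R : pzSemiRingType) (T : finType) (F : T -> R) x :
  \sum_y (y == x)%:R * F y = F x.
Proof.
rewrite (bigD1 x) //= eqxx mul1r big1 ?addr0 // => y /negbTE ->.
by rewrite mul0r.
Qed.

Lemma sqr_convex_comb_le (F : numDomainType) n (w z : 'I_n -> F) :
  (forall l, 0 <= w l) -> \sum_l w l = 1 -> (forall l, z l \is Num.real) ->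
  (\sum_l w l * z l) ^+ 2 <= \sum_l w l * z l ^+ 2.
Proof.
move=> w_ge0 w_sum1 z_real; set c := \sum_l w l * z l.
have c_real : c \is Num.real.
  by apply: rpred_sum => l _; apply: rpredM; [exact: ger0_real | exact: z_real].
have expand l : w l * (z l - c) ^+ 2
    = w l * z l ^+ 2 - 2 * c * (w l * z l) + c ^+ 2 * w l by ring.
have -> : \sum_l w l * z l ^+ 2 = c ^+ 2 + \sum_l w l * (z l - c) ^+ 2.
  under [X in _ = _ + X]eq_bigr do rewrite expand.
  rewrite !big_split /= sumrN -!mulr_sumr w_sum1 -/c; ring.
by rewrite lerDl sumr_ge0 // => l _; rewrite mulr_ge0 // -realEsqr rpredB.
Qed.

Lemma conjC_of_real_sum_idiff (R : rcfType) (p q : R[i]) :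
  p + q \is Num.real -> 'i * (p - q) \is Num.real -> p = q^*.
Proof.
case: p q => [a b] [c e]; rewrite !CrealE; simpc.
rewrite !eq_complex /= => /andP[_ /eqP Hb] /andP[_ /eqP Ha].
by congr (_ +i* _)%C; lra.
Qed.

Lemma real_complex_real (R : rcfType) (r : R) : (r%:C)%C \is Num.real.
Proof. by apply/complex_realP; exists r. Qed.

Section TensorOperators.
Variables (R : realType) (N : nat) (d : 'I_N -> nat).
Local Notation C := R[i].
Local Notation op := (top R d).

Definition opmul (X Y : op) : op := fun x y => \sum_z X x z * Y z y.
Definition hermitian_op (X : op) := forall x y, X x y = (X y x)^*.

Lemma tensM (B B' : forall k : 'I_N, 'M[C]_(d k)) x y :
  opmul (tens B) (tens B') x y = tens (fun k => B k *m B' k) x y.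
Proof.
rewrite /opmul /tens; under eq_bigr do rewrite -big_split /=.
rewrite -(prod_sum_dffun (fun k j => B k (x k) j * B' k j (y k))).
by apply: eq_bigr => k _; rewrite mxE.
Qed.

Lemma eq_trprod (sg X Y : op) : (forall x y, X x y = Y x y) ->
  trprod sg X = trprod sg Y.
Proof. by move=> eqXY; apply: eq_bigr => x _; apply: eq_bigr => y _; rewrite eqXY. Qed.

Lemma trprod_comb (I : finType) (sg : op) (a : I -> C) (X : I -> op) :
  trprod sg (fun x y => \sum_s a s * X s x y) = \sum_s a s * trprod sg (X s).
Proof.
rewrite /trprod; under eq_bigr do under eq_bigr do rewrite mulr_sumr.
under eq_bigr do rewrite exchange_big.
rewrite exchange_big; apply: eq_bigr => s _.
rewrite mulr_sumr; apply: eq_bigr => x _.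
rewrite mulr_sumr; apply: eq_bigr => y _; ring.
Qed.

Lemma trprodZ (sg X : op) (k : C) :
  trprod sg (fun x y => k * X x y) = k * trprod sg X.
Proof.
rewrite /trprod mulr_sumr; apply: eq_bigr => x _.
rewrite mulr_sumr; apply: eq_bigr => y _; ring.
Qed.

Lemma opmul_comb (I : finType) (a : I -> C) (X : I -> op) x y :
  let Y x y := \sum_s a s * X s x y in
  opmul Y Y x y = \sum_s a s * \sum_t a t * opmul (X s) (X t) x y.
Proof.
rewrite /opmul; under eq_bigr do rewrite mulr_suml.
under eq_bigr do under eq_bigr do rewrite mulr_sumr.
rewrite exchange_big; apply: eq_bigr => s _.
rewrite exchange_big mulr_sumr; apply: eq_bigr => t _.
rewrite !mulr_sumr; apply: eq_bigr => z _; ring.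
Qed.

Lemma qform_pair (sg : op) (a b : tidx d) (l : C) :
  \sum_x \sum_y ((x == a)%:R + l * (x == b)%:R)^* * sg x y
     * ((y == a)%:R + l * (y == b)%:R)
  = sg a a + l * sg a b + l^* * sg b a + l^* * l * sg b b.
Proof.
have split_y x y : ((x == a)%:R + l * (x == b)%:R)^* * sg x y
     * ((y == a)%:R + l * (y == b)%:R)
   = ((x == a)%:R + l^* * (x == b)%:R) *
     (sg x y * (y == a)%:R + (l * sg x y) * (y == b)%:R).
  by rewrite rmorphD rmorphM !rmorph_nat; ring.
under eq_bigr do under eq_bigr do rewrite split_y.
under eq_bigr do rewrite -mulr_sumr big_split /= !sumr_delta_r mulrDl -mulrA.
by rewrite big_split /= -mulr_sumr !sumr_delta_l; ring.
Qed.

Lemma psd_hermitian (sg : op) : psd sg -> hermitian_op sg.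
Proof.
move=> sg_psd a b.
have form_real x y l :
    sg x x + l * sg x y + l^* * sg y x + l^* * l * sg y y \is Num.real.
  by apply: ger0_real; rewrite -qform_pair.
have diag_real x : sg x x \is Num.real.
  by have := form_real x x 0; rewrite rmorph0 !mul0r !addr0.
apply: conjC_of_real_sum_idiff.
  have := rpredB (rpredB (form_real a b 1) (diag_real a)) (diag_real b).
  by rewrite rmorph1 !mul1r (_ : _ - _ - _ = sg a b + sg b a) //; ring.
have := rpredB (rpredB (form_real a b 'i) (diag_real a)) (diag_real b).
have -> : 'i^* * 'i = 1 :> C by rewrite conjCi mulNr -expr2 sqrCi opprK.
by rewrite conjCi mul1r (_ : _ - _ - _ = 'i * (sg a b - sg b a)) //; ring.
Qed.

Lemma trprod_real (sg X : op) :
  hermitian_op sg -> hermitian_op X -> trprod sg X \is Num.real.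
Proof.
move=> sg_herm X_herm; rewrite CrealE; apply/eqP.
rewrite /trprod rmorph_sum exchange_big; apply: eq_bigr => y _.
rewrite rmorph_sum; apply: eq_bigr => x _.
by rewrite [sg x y]sg_herm [X y x]X_herm rmorphM mulrC.
Qed.

Lemma trprod_sqr_le (sg X : op) : density sg -> hermitian_op X ->
  trprod sg X ^+ 2 <= trprod sg (opmul X X).
Proof.
move=> [sg_psd sg_tr1] X_herm; set c := trprod sg X.
pose v x y := X y x - c * (y == x)%:R.
have expand x : \sum_a \sum_b (v x a)^* * sg a b * v x b
    = \sum_a \sum_b X x a * sg a b * X b x - c * \sum_a X x a * sg a x
      - c^* * \sum_b sg x b * X b x + c^* * c * sg x x.
  have split_ab a b : (v x a)^* * sg a b * v x b
      = X x a * sg a b * X b x - c * (X x a * sg a b * (b == x)%:R)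
        - c^* * ((a == x)%:R * (sg a b * X b x))
        + c^* * c * ((a == x)%:R * (sg a b * (b == x)%:R)).
    by rewrite [X x a]X_herm /v rmorphB rmorphM rmorph_nat; ring.
  under eq_bigr do under eq_bigr do rewrite split_ab.
  under eq_bigr do rewrite !(big_split, sumrN) /= -!mulr_sumr !sumr_delta_r.
  by rewrite !(big_split, sumrN) /= -!mulr_sumr !sumr_delta_l.
have sum_quadratic : \sum_x \sum_a \sum_b (v x a)^* * sg a b * v x b
    = trprod sg (opmul X X) - c ^+ 2.
  under eq_bigr do rewrite expand.
  rewrite !(big_split, sumrN) /= -!mulr_sumr -/(tr sg) sg_tr1 mulr1.
  have -> : \sum_x \sum_a X x a * sg a x = c.
    by rewrite exchange_big; apply: eq_bigr => a _; apply: eq_bigr => x _; rewrite mulrC.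
  have -> : \sum_x \sum_a \sum_b X x a * sg a b * X b x = trprod sg (opmul X X).
    rewrite /trprod /opmul; under [RHS]eq_bigr do under eq_bigr do rewrite mulr_sumr.
    rewrite exchange_big; apply: eq_bigr => a _.
    rewrite exchange_big; apply: eq_bigr => b _.
    by apply: eq_bigr => x _; ring.
  rewrite -/(trprod sg X) -/c; ring.
rewrite -subr_ge0 -sum_quadratic sumr_ge0 // => x _; exact: sg_psd.
Qed.

Lemma mixidxK (tau : {set 'I_N}) (x y : tidx d) :
  mixidx tau (mixidx tau x y) (mixidx tau y x) = x.
Proof. by apply/ffunP => k; rewrite !ffunE; case: (k \in tau). Qed.

Lemma mixidx_diag (tau : {set 'I_N}) (x : tidx d) : mixidx tau x x = x.
Proof. by apply/ffunP => k; rewrite !ffunE; case: (k \in tau). Qed.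

Lemma tr_ptrans (tau : {set 'I_N}) (rho : op) : tr (ptrans tau rho) = tr rho.
Proof. by apply: eq_bigr => x _; rewrite /ptrans mixidx_diag. Qed.

Lemma trprod_ptrans_tens (tau : {set 'I_N}) (rho : op) (B : forall k, 'M[C]_(d k)) :
  trprod (ptrans tau rho) (tens (fun k => if k \in tau then (B k)^T else B k))
  = trprod rho (tens B).
Proof.
rewrite /trprod !pair_big /=.
pose swap (p : tidx d * tidx d) := (mixidx tau p.1 p.2, mixidx tau p.2 p.1).
have swapK : involutive swap by case=> x y; rewrite /swap /= !mixidxK.
rewrite [RHS](reindex_inj (inv_inj swapK)); apply: eq_bigr => -[x y] _.
congr (_ * _); apply: eq_bigr => k _; rewrite /mixidx !ffunE.
by case: (k \in tau); rewrite ?mxE.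
Qed.

Lemma hermitian_tens (B : forall k, 'M[C]_(d k)) :
  (forall k, hermitian_mx (B k)) -> hermitian_op (tens B).
Proof.
by move=> B_herm x y; rewrite /tens rmorph_prod; apply: eq_bigr => k _; apply: B_herm.
Qed.

Lemma hermitian_real_comb (I : finType) (r : I -> R) (X : I -> op) :
  (forall s, hermitian_op (X s)) ->
  hermitian_op (fun x y => \sum_s (r s)%:C%C * X s x y).
Proof.
move=> X_herm x y; rewrite rmorph_sum; apply: eq_bigr => s _.
by rewrite [X s x y]X_herm -[(r s)%:C%C in LHS](conj_Creal (real_complex_real _)) rmorphM.
Qed.

Lemma sum_subsets_trprod_tens (rho : op) (P Q : forall k : 'I_N, 'M[C]_(d k)) :
  \sum_(tau : {set 'I_N}) trprod rho (tens (fun k => if k \in tau then P k else Q k))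
  = trprod rho (tens (fun k => P k + Q k)).
Proof.
rewrite /trprod exchange_big; apply: eq_bigr => x _.
rewrite exchange_big; apply: eq_bigr => y _.
rewrite -mulr_sumr /tens; congr (_ * _).
under [RHS]eq_bigr do rewrite mxE.
by rewrite bigA_distr; apply: eq_bigr => tau _; apply: eq_bigr => k _; case: ifP.
Qed.

End TensorOperators.

Section Polarization.
Variables (R : realType) (N M : nat).
Local Notation C := R[i].
Local Notation midx := (midx N M).

Definition rank1 (a : 'I_M -> R) (u v : 'I_M) : C := (a u * a v)%:C%C.

Definition mlform (H : midx -> midx -> C) (b : 'I_N -> 'I_M -> 'I_M -> C) : C :=
  \sum_(s : midx) \sum_(t : midx) H s t * \prod_k b k (s k) (t k).

Lemma rank1_indicator2_form (Q : 'I_M -> 'I_M -> C) (u v : 'I_M) :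
  \sum_u' \sum_v' rank1 (fun w => (w == u)%:R + (w == v)%:R) u' v' * Q u' v'
  = Q u u + Q u v + (Q v u + Q v v).
Proof.
have split_v' u' v' : rank1 (fun w => (w == u)%:R + (w == v)%:R) u' v' * Q u' v'
    = ((u' == u)%:R + (u' == v)%:R) * (Q u' v' * (v' == u)%:R + Q u' v' * (v' == v)%:R).
  by rewrite /rank1 rmorphM !rmorphD !rmorph_nat; ring.
under eq_bigr do under eq_bigr do rewrite split_v'.
under eq_bigr do rewrite -mulr_sumr big_split /= !sumr_delta_r mulrDl.
by rewrite big_split /= !sumr_delta_l.
Qed.

(* Testing on e_u + e_v shows that Q is skew-symmetric. *)
Lemma sym_form_eq0 (Q : 'I_M -> 'I_M -> C) :
  (forall a, \sum_u \sum_v rank1 a u v * Q u v = 0) ->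
  forall B : 'I_M -> 'I_M -> C, (forall u v, B u v = B v u) ->
  \sum_u \sum_v B u v * Q u v = 0.
Proof.
move=> Q_rank1 B B_sym.
have Q_pair u v : Q u u + Q u v + (Q v u + Q v v) = 0.
  by rewrite -rank1_indicator2_form Q_rank1.
have Q_diag u : Q u u = 0.
  have := Q_pair u u; rewrite (_ : _ + _ = Q u u * 4%:R); last by ring.
  by move/eqP; rewrite mulf_eq0 pnatr_eq0 orbF => /eqP.
have Q_skew u v : Q u v + Q v u = 0.
  by have := Q_pair u v; rewrite !Q_diag add0r addr0.
set S := \sum_u \sum_v B u v * Q u v.
have S_opp : S = - S.
  rewrite /S -sumrN exchange_big; apply: eq_bigr => v _.
  rewrite -sumrN; apply: eq_bigr => u _.
  by rewrite B_sym -mulrN; congr (_ * _); apply/eqP; rewrite -addr_eq0 Q_skew.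
have : S *+ 2 == 0 by rewrite mulr2n {2}S_opp addrN.
by rewrite mulrn_eq0 => /eqP.
Qed.

Lemma mlform_slotE (m : 'I_N) H b :
  mlform H b = \sum_u \sum_v b m u v *
    \sum_(s : midx) \sum_(t : midx) (u == s m)%:R * (v == t m)%:R *
      (H s t * \prod_(k | k != m) b k (s k) (t k)).
Proof.
set W := fun s t => H s t * \prod_(k | k != m) b k (s k) (t k).
transitivity (\sum_(s : midx) \sum_(t : midx) b m (s m) (t m) * W s t).
  by apply: eq_bigr => s _; apply: eq_bigr => t _; rewrite /W (bigD1 m) //=; ring.
under [RHS]eq_bigr do under eq_bigr do rewrite mulr_sumr.
under [RHS]eq_bigr do under eq_bigr do under eq_bigr do rewrite mulr_sumr.
under [RHS]eq_bigr do rewrite exchange_big.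
under [RHS]eq_bigr do under eq_bigr do rewrite exchange_big.
rewrite [RHS]exchange_big; under [RHS]eq_bigr do rewrite exchange_big.
apply: eq_bigr => s _; apply: eq_bigr => t _.
have deltas u v : b m u v * ((u == s m)%:R * (v == t m)%:R * W s t)
    = (u == s m)%:R * ((b m u v * W s t) * (v == t m)%:R) by ring.
under eq_bigr do under eq_bigr do rewrite deltas.
by under eq_bigr do rewrite -mulr_sumr sumr_delta_r; rewrite sumr_delta_l.
Qed.

Lemma mlform_sym_slot (m : 'I_N) H b :
  (forall a, mlform H (fun k => if k == m then rank1 a else b k) = 0) ->
  (forall u v, b m u v = b m v u) -> mlform H b = 0.
Proof.
move=> H_rank1 bm_sym; rewrite (mlform_slotE m); apply: sym_form_eq0 => // a.
rewrite -[RHS](H_rank1 a) (mlform_slotE m) eqxx.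
apply: eq_bigr => u _; apply: eq_bigr => v _; congr (_ * _).
apply: eq_bigr => s _; apply: eq_bigr => t _; congr (_ * (_ * _)).
by apply: eq_bigr => k /negbTE ->.
Qed.

Lemma mlform_sym_eq0 H :
  (forall a : 'I_N -> 'I_M -> R, mlform H (fun k => rank1 (a k)) = 0) ->
  forall b, (forall k u v, b k u v = b k v u) -> mlform H b = 0.
Proof.
move=> H_rank1.
suff sym_below n : forall b (a : 'I_N -> 'I_M -> R),
    (forall k : 'I_N, (k < n)%N -> forall u v, b k u v = b k v u) ->
    (forall k : 'I_N, (n <= k)%N -> b k = rank1 (a k)) -> mlform H b = 0.
  move=> b b_sym; apply: (sym_below N b (fun _ _ => 0)) => // k.
  by rewrite leqNgt ltn_ord.
elim: n => [|n IHn] b a b_sym b_rank1.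
  by rewrite -(H_rank1 a); apply: eq_bigr => s _; apply: eq_bigr => t _;
    congr (_ * _); apply: eq_bigr => k _; rewrite b_rank1.
have [ltnN | leNn] := ltnP n N; last first.
  apply: (IHn b a) => k lt_kn; first exact/b_sym/ltnW.
  by have := leq_trans (ltn_ord k) (leq_trans leNn lt_kn); rewrite ltnn.
pose m := Ordinal ltnN.
apply: (@mlform_sym_slot m H b); last exact: b_sym.
move=> a'; apply: (IHn _ (fun k => if k == m then a' else a k)) => k.
  by case: eqP => [->|_ /ltnW]; [rewrite ltnn | exact: b_sym].
case: eqP => [-> //|/eqP neq_km le_nk]; apply: b_rank1.
by rewrite ltn_neqAle le_nk andbT; apply: contra neq_km => /eqP eq_nk; apply/eqP/val_inj.
Qed.

End Polarization.

Definition gram_defect (R : realType) N M D (T : mlcoef R N M D)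
  (s t : midx N M) : R[i] :=
  (\sum_i T i s * T i t)%:C%C - (s == t)%:R.

Lemma norm_preserving_sum_sqr (R : realType) N M D (T : mlcoef R N M D) a :
  norm_preserving T ->
  \sum_i mlapply T a i ^+ 2 = \prod_(k < N) \sum_j a k j ^+ 2.
Proof.
move=> /(_ a) /(congr1 (fun r => r ^+ 2)); rewrite /enorm -prodrXl.
rewrite sqr_sqrtr ?sumr_ge0 // => [->|i _]; last exact: sqr_ge0.
by apply: eq_bigr => k _; rewrite sqr_sqrtr // sumr_ge0 // => j _; apply: sqr_ge0.
Qed.

Lemma sum_sqr_mlapply (R : realType) N M D (T : mlcoef R N M D) a :
  \sum_i mlapply T a i ^+ 2 = \sum_(s : midx N M) \sum_(t : midx N M)
    (\sum_i T i s * T i t) * \prod_k (a k (s k) * a k (t k)).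
Proof.
under eq_bigr do rewrite expr2 /mlapply mulr_suml.
under eq_bigr do under eq_bigr do rewrite mulr_sumr.
rewrite exchange_big; under eq_bigr do rewrite exchange_big.
apply: eq_bigr => s _; apply: eq_bigr => t _.
by rewrite big_split /= mulr_suml; apply: eq_bigr => i _; ring.
Qed.

Lemma mlform_gram_defect_rank1 (R : realType) N M D (T : mlcoef R N M D) :
  norm_preserving T ->
  forall a, mlform (gram_defect T) (fun k => rank1 (a k)) = 0.
Proof.
move=> T_np a; rewrite /mlform /gram_defect.
have -> : \sum_(s : midx N M) \sum_(t : midx N M)
      ((\sum_i T i s * T i t)%:C%C - (s == t)%:R) * \prod_k rank1 (a k) (s k) (t k)
    = ((\sum_(s : midx N M) \sum_(t : midx N M) (\sum_i T i s * T i t)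
         * \prod_k (a k (s k) * a k (t k))
       - \sum_(s : midx N M) \sum_(t : midx N M) (s == t)%:R
         * \prod_k (a k (s k) * a k (t k)))%:C)%C.
  rewrite rmorphB !rmorph_sum -sumrB; apply: eq_bigr => s _.
  rewrite !rmorph_sum -sumrB; apply: eq_bigr => t _.
  by rewrite !rmorphM rmorph_nat rmorph_prod -mulrBl.
have delta_sum : \sum_(s : midx N M) \sum_(t : midx N M) (s == t)%:R
    * \prod_k (a k (s k) * a k (t k)) = \prod_(k < N) \sum_j a k j ^+ 2.
  rewrite bigA_distr_bigA; apply: eq_bigr => s _.
  rewrite (eq_bigr (fun t => (t == s)%:R * \prod_k (a k (s k) * a k (t k))));
    last by move=> t _; rewrite eq_sym.
  by rewrite sumr_delta_l; apply: eq_bigr => k _; rewrite expr2.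
by rewrite -sum_sqr_mlapply delta_sum norm_preserving_sum_sqr // subrr.
Qed.

Section Observables.
Variables (R : realType) (N M : nat) (d : 'I_N -> nat).
Variable A : forall k : 'I_N, 'I_M -> 'M[R[i]]_(d k).
Local Notation C := R[i].
Local Notation op := (top R d).
Local Notation midx := (midx N M).

Definition corr D (T : mlcoef R N M D) (rho : op) (i : 'I_D) : C :=
  \sum_(s : midx) (T i s)%:C%C * trprod rho (tens (fun k => A k (s k))).

Definition trmx_on (tau : {set 'I_N}) (k : 'I_N) (j : 'I_M) : 'M[C]_(d k) :=
  if k \in tau then (A k j)^T else A k j.

Definition mlop D (T : mlcoef R N M D) (tau : {set 'I_N}) (i : 'I_D) : op :=
  fun x y => \sum_(s : midx) (T i s)%:C%C * tens (fun k => trmx_on tau k (s k)) x y.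

Definition anticomm (s t : midx) (k : 'I_N) : 'M[C]_(d k) :=
  A k (t k) *m A k (s k) + A k (s k) *m A k (t k).

Lemma trprod_ptrans_mlop D (T : mlcoef R N M D) rho tau i :
  trprod (ptrans tau rho) (mlop T tau i) = corr T rho i.
Proof.
rewrite /mlop trprod_comb; apply: eq_bigr => s _; congr (_ * _).
exact: (trprod_ptrans_tens tau rho (fun k => A k (s k))).
Qed.

Hypothesis A_herm : forall k j, hermitian_mx (A k j).

Lemma hermitian_mlop D (T : mlcoef R N M D) tau i : hermitian_op (mlop T tau i).
Proof.
apply: hermitian_real_comb => s; apply: hermitian_tens => k i1 i2.
by rewrite /trmx_on; case: (k \in tau); rewrite ?mxE; apply: A_herm.
Qed.

Lemma corr_real D (T : mlcoef R N M D) rho i :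
  hermitian_op rho -> corr T rho i \is Num.real.
Proof.
move=> rho_herm; apply: rpred_sum => s _; apply: rpredM; first exact: real_complex_real.
by apply: trprod_real => //; apply: hermitian_tens.
Qed.

Lemma trprod_ptrans_mlop_sqr D (T : mlcoef R N M D) rho tau i :
  trprod (ptrans tau rho) (opmul (mlop T tau i) (mlop T tau i)) =
  \sum_(s : midx) (T i s)%:C%C * \sum_(t : midx) (T i t)%:C%C *
    trprod rho (tens (fun k => if k \in tau then A k (t k) *m A k (s k)
                               else A k (s k) *m A k (t k))).
Proof.
rewrite (eq_trprod _ (opmul_comb _ _)) trprod_comb; apply: eq_bigr => s _.
congr (_ * _); rewrite trprod_comb; apply: eq_bigr => t _; congr (_ * _).
rewrite (eq_trprod _ (tensM _ _)) -(trprod_ptrans_tens tau rho); apply: eq_trprod => x y.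
by apply: eq_bigr => k _; rewrite /trmx_on; case: (k \in tau); rewrite ?trmx_mul.
Qed.

Lemma sum_ptrans_mlop_sqr D (T : mlcoef R N M D) rho :
  \sum_(tau : {set 'I_N}) \sum_i
    trprod (ptrans tau rho) (opmul (mlop T tau i) (mlop T tau i))
  = \sum_(s : midx) \sum_(t : midx)
      (\sum_i T i s * T i t)%:C%C * trprod rho (tens (anticomm s t)).
Proof.
rewrite exchange_big /=; under eq_bigr do under eq_bigr do rewrite trprod_ptrans_mlop_sqr.
under eq_bigr do under eq_bigr do under eq_bigr do rewrite mulr_sumr.
under eq_bigr do rewrite exchange_big; under eq_bigr do under eq_bigr do rewrite exchange_big.
under eq_bigr do under eq_bigr do under eq_bigr do
  rewrite -mulr_sumr -mulr_sumr sum_subsets_trprod_tens.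
rewrite exchange_big; under eq_bigr do rewrite exchange_big.
apply: eq_bigr => s _; apply: eq_bigr => t _.
rewrite rmorph_sum mulr_suml; apply: eq_bigr => i _.
by rewrite rmorphM mulrA.
Qed.

Lemma gram_defect_anticomm D (T : mlcoef R N M D) rho : norm_preserving T ->
  \sum_(s : midx) \sum_(t : midx)
    gram_defect T s t * trprod rho (tens (anticomm s t)) = 0.
Proof.
move=> T_np.
pose b x y k u v := (A k v *m A k u + A k u *m A k v) (y k) (x k).
transitivity (\sum_x \sum_y rho x y * mlform (gram_defect T) (b x y)).
  rewrite /trprod.
  under eq_bigr do under eq_bigr do rewrite mulr_sumr.
  under eq_bigr do under eq_bigr do under eq_bigr do rewrite mulr_sumr.
  under eq_bigr do rewrite exchange_big.
  under eq_bigr do under eq_bigr do rewrite exchange_big.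
  rewrite exchange_big; under eq_bigr do rewrite exchange_big.
  apply: eq_bigr => x _; apply: eq_bigr => y _.
  rewrite /mlform mulr_sumr; apply: eq_bigr => s _.
  rewrite mulr_sumr; apply: eq_bigr => t _.
  by rewrite mulrCA.
apply: big1 => x _; apply: big1 => y _.
rewrite (mlform_sym_eq0 (mlform_gram_defect_rank1 T_np)) ?mulr0 // => k u v.
by rewrite /b addrC.
Qed.

Lemma sum_gram_anticomm D (T : mlcoef R N M D) rho : norm_preserving T ->
  \sum_(s : midx) \sum_(t : midx)
    (\sum_i T i s * T i t)%:C%C * trprod rho (tens (anticomm s t))
  = \sum_(s : midx) trprod rho (tens (anticomm s s)).
Proof.
move=> T_np; transitivity (\sum_(s : midx) \sum_(t : midx)
    (gram_defect T s t + (t == s)%:R) * trprod rho (tens (anticomm s t))).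
  apply: eq_bigr => s _; apply: eq_bigr => t _.
  by rewrite /gram_defect eq_sym subrK.
under eq_bigr do under eq_bigr do rewrite mulrDl.
under eq_bigr do rewrite big_split /= sumr_delta_l.
by rewrite big_split /= gram_defect_anticomm // add0r.
Qed.

Lemma norm_preserving_bound D (T : mlcoef R N M D) rho :
  norm_preserving T -> density rho -> (forall tau, psd (ptrans tau rho)) ->
  \sum_i corr T rho i ^+ 2 <=
  \sum_(s : midx) trprod rho (tens (fun k => A k (s k) *m A k (s k))).
Proof.
move=> T_np [rho_psd rho_tr1] ptrans_psd.
have nsubsets : \sum_(tau : {set 'I_N}) (1 : C) = \prod_(k < N) 2.
  by rewrite bigA_distr; apply: eq_bigr => tau _; rewrite big1 // => k _; case: ifP.
have anticomm_diag s : trprod rho (tens (anticomm s s))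
    = \prod_(k < N) 2 * trprod rho (tens (fun k => A k (s k) *m A k (s k))).
  rewrite -trprodZ; apply: eq_trprod => x y; rewrite /tens -big_split /=.
  by apply: eq_bigr => k _; rewrite mxE mulr2n mulrDl mul1r.
have pow2_gt0 : 0 < \prod_(k < N) (2 : C) by apply: prodr_gt0 => k _; rewrite ltr0n.
rewrite -(ler_pM2l pow2_gt0) [X in _ <= X]mulr_sumr.
rewrite -(eq_bigr _ (fun s _ => anticomm_diag s)).
rewrite -nsubsets mulr_suml mul1r.
apply: (le_trans (y := \sum_(tau : {set 'I_N}) \sum_i
   trprod (ptrans tau rho) (opmul (mlop T tau i) (mlop T tau i)))).
  apply: ler_sum => tau _; apply: ler_sum => i _.
  rewrite -(trprod_ptrans_mlop T rho tau i); apply: trprod_sqr_le.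
    by split; rewrite ?tr_ptrans.
  exact: hermitian_mlop.
by rewrite sum_ptrans_mlop_sqr sum_gram_anticomm.
Qed.

End Observables.

Lemma mlapply_basis (R : realType) N M D (T : mlcoef R N M D) i (s : midx N M) :
  mlapply T (fun k j => ((j == s k)%:R : R)) i = T i s.
Proof.
rewrite /mlapply (bigD1 s) //= big1 ?mulr1 => [|k _]; last by rewrite eqxx.
rewrite big1 ?addr0 // => s' neq_s's.
have /existsP [k neq_k] : [exists k, s' k != s k].
  rewrite -negb_forall; apply: contra neq_s's => /forallP eq_s's.
  by apply/eqP/ffunP => k; apply/eqP.
by rewrite (bigD1 k) //= (negbTE neq_k) mul0r mulr0.
Qed.

Section ContractionBounds.
Variables (R : realType) (N M D : nat) (T : mlcoef R N M D) (d : 'I_N -> nat).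
Variables (rho : top R d) (A : forall k : 'I_N, 'I_M -> 'M[R[i]]_(d k)).
Hypotheses (rho_density : density rho) (ptrans_psd : forall tau, psd (ptrans tau rho)).
Hypothesis A_herm : forall k j, hermitian_mx (A k j).

Local Notation rhs :=
  (\sum_(s : midx N M) trprod rho (tens (fun k => A k (s k) *m A k (s k)))).

Lemma convex_comb_bound :
  convex_comb_norm_preserving T -> \sum_i corr A T rho i ^+ 2 <= rhs.
Proof.
move=> [n [w [U [w_ge0 w_sum1 U_np T_comb]]]].
have rho_herm := psd_hermitian rho_density.1.
have corr_comb i : corr A T rho i = \sum_l (w l)%:C%C * corr A (U l) rho i.
  rewrite /corr; under eq_bigr do rewrite -(mlapply_basis T) T_comb rmorph_sum mulr_suml.
  rewrite exchange_big; apply: eq_bigr => l _; rewrite mulr_sumr.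
  by apply: eq_bigr => s _; rewrite mlapply_basis rmorphM mulrA.
have wC_ge0 l : 0 <= (w l)%:C%C :> R[i] by rewrite ler0c.
have wC_sum1 : \sum_l (w l)%:C%C = 1 :> R[i] by rewrite -rmorph_sum w_sum1.
apply: (le_trans (y := \sum_i \sum_l (w l)%:C%C * corr A (U l) rho i ^+ 2)).
  apply: ler_sum => i _; rewrite corr_comb; apply: sqr_convex_comb_le => // l.
  exact: corr_real.
rewrite exchange_big -[X in _ <= X]mul1r -wC_sum1 mulr_suml.
apply: ler_sum => l _; rewrite -mulr_sumr ler_wpM2l //.
exact: norm_preserving_bound.
Qed.

Lemma dilation_bound : has_np_dilation T -> \sum_i corr A T rho i ^+ 2 <= rhs.
Proof.
move=> [D' [leDD' [T' [T'_np T'_ext]]]].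
have rho_herm := psd_hermitian rho_density.1.
have corr_ext i : corr A T rho i = corr A T' rho (widen_ord leDD' i).
  apply: eq_bigr => s _.
  by rewrite -(mlapply_basis T) -(mlapply_basis T') T'_ext.
apply: le_trans (norm_preserving_bound A_herm T'_np rho_density ptrans_psd).
rewrite (bigID (fun j : 'I_D' => (j < D)%N)) /= big_ord_narrow.
under eq_bigr do rewrite corr_ext.
by rewrite lerDl sumr_ge0 // => j _; rewrite -realEsqr corr_real.
Qed.

End ContractionBounds.

Theorem corollary1 (R : realType) (N M D : nat) (T : mlcoef R N M D)
  (d : 'I_N -> nat) (rho : top R d)
  (A : forall k : 'I_N, 'I_M -> 'M[R[i]]_(d k)) :
  contraction T ->
  (convex_comb_norm_preserving T \/ has_np_dilation T) ->
  density rho ->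
  (forall tau : {set 'I_N}, psd (ptrans tau rho)) ->
  (forall k j, hermitian_mx (A k j)) ->
  \sum_(i < D) (\sum_(s : midx N M)
       ((T i s)%:C)%C * trprod rho (tens (fun k => A k (s k)))) ^+ 2
  <= \sum_(s : midx N M)
       trprod rho (tens (fun k => A k (s k) *m A k (s k))).
Proof.
(* The contraction hypothesis follows from either of the other two. *)
move=> _ [T_convex | T_dilation] rho_density ptrans_psd A_herm.
  exact: convex_comb_bound.
exact: dilation_bound.
Qed.
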